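(* Let $\Sigma_{-1,-1}\in\mathbb{R}^{(p-1)\times(p-1)}$ be a covariance matrix with all diagonal entries $1$ and $\Lambda^2_{\min}(\Sigma_{-1,-1})\gg0$. Fix $S\subset\{2,\dots,p\}$ with cardinality ${\rm s}$ and $\lambda^\sharp>0$. Suppose there exists $z\in\mathbb{R}^{p-1}$ with $\|z\|_\infty\le1$, $$1-\lambda^{\sharp2}\|\Sigma_{-1,-1}^{-1/2}z\|_2^2\gg0,\qquad \lambda^{\sharp2}\|\Sigma_{-1,-1}^{-1/2}z\|_2^2\gg0 .$$ Let $\gamma^\sharp\in\mathbb{R}^{p-1}$ satisfy $\gamma^\sharp_j=0$ for $j\notin S$ and $$1-\lambda^{\sharp2}\|\Sigma_{-1,-1}^{-1/2}z\|_2^2-\|\Sigma_{-1,-1}^{1/2}\gamma^\sharp\|_2^2\gg0 .$$ Define $\gamma^0:=\gamma^\sharp+\lambda^\sharp\Sigma_{-1,-1}^{-1}z$. Then, if $\lambda^\sharp\sqrt{\rm s}\to0$: the pair $(\gamma^\sharp,\lambda^\sharp)$ is eligible (with respect to this $\gamma^0$), $\gamma^0$ is eventually allowed, $\lambda^\sharp\|\gamma^0\|_1\not\to0$, and in fact $\|\Sigma_{-1,-1}^{1/2}(\gamma^0-\gamma^\sharp)\|_2^2\gg0$.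
   Context: Asymptotic framework: all quantities may depend on $n$; limits as $n\to\infty$. ''$a\gg0$'' means $a$ is strictly positive and bounded away from zero (eventually). $\Lambda^2_{\min}(A)$ is the smallest eigenvalue of $A$. A pair $(\gamma^\sharp,\lambda^\sharp)$ is eligible (relative to $\gamma^0$ and $\Sigma_{-1,-1}$) if $\|\Sigma_{-1,-1}(\gamma^\sharp-\gamma^0)\|_\infty\le\lambda^\sharp$ and $\lambda^\sharp\|\gamma^\sharp\|_1\to0$. A vector $\gamma^0$ is allowed if the matrix $\Sigma(\gamma^0):=\begin{pmatrix}1&\gamma^{0T}\Sigma_{-1,-1}\\ \Sigma_{-1,-1}\gamma^0&\Sigma_{-1,-1}\end{pmatrix}$ is positive definite with $\Lambda^2_{\min}(\Sigma(\gamma^0))\gg0$ and $\|\Sigma_{-1,-1}\gamma^0\|_\infty\le1$. *)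

From HB Require Import structures.
From mathcomp Require Import all_boot all_order all_algebra.
From mathcomp Require Import all_classical all_reals all_analysis.
Set Implicit Arguments. Unset Strict Implicit. Unset Printing Implicit Defensive.
Import Order.TTheory GRing.Theory Num.Theory.
Local Open Scope ring_scope.
Local Open Scope classical_set_scope.

Section Defs.
Variable R : realType.

Definition normoo d (v : 'cV[R]_d) : R := \big[Num.max/0]_(i < d) `|v i 0|.
Definition norm1 d (v : 'cV[R]_d) : R := \sum_(i < d) `|v i 0|.
(* quadratic form v^T A v ; note ||A^{1/2} v||_2^2 = qform A v and
   ||A^{-1/2} v||_2^2 = qform (invmx A) v for symmetric positive definite A *)
Definition qform d (A : 'M[R]_d) (v : 'cV[R]_d) : R := (v^T *m A *m v) 0 0.

Definition posdef d (A : 'M[R]_d) := forall v : 'cV[R]_d, v != 0 -> 0 < qform A v.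

(* a >> 0 : eventually bounded away from zero (and positive) *)
Definition away0 (a : nat -> R) :=
  exists2 c : R, 0 < c & \forall n \near \oo, c <= a n.

(* Lambda^2_min(A_n) >> 0 : eventually every (real) eigenvalue is >= c > 0 *)
Definition mineig_away0 (k : nat -> nat) (A : forall n, 'M[R]_(k n)) :=
  exists2 c : R, 0 < c & \forall n \near \oo, forall a, eigenvalue (A n) a -> c <= a.

Definition SigmaG d (Sig : 'M[R]_d) (g : 'cV[R]_d) : 'M[R]_(1 + d) :=
  block_mx (1%:M : 'M[R]_1) (g^T *m Sig) (Sig *m g) Sig.

Definition eligible (d : nat -> nat) (Sig : forall n, 'M[R]_(d n))
  (gs g0 : forall n, 'cV[R]_(d n)) (lam : nat -> R) :=
  (\forall n \near \oo, normoo (Sig n *m (gs n - g0 n)) <= lam n) /\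
  (lam n * norm1 (gs n) @[n --> \oo] --> 0).

Definition allowed (d : nat -> nat) (Sig : forall n, 'M[R]_(d n))
  (g0 : forall n, 'cV[R]_(d n)) :=
  (\forall n \near \oo, posdef (SigmaG (Sig n) (g0 n)) /\ normoo (Sig n *m g0 n) <= 1) /\
  mineig_away0 (fun n => SigmaG (Sig n) (g0 n)).

End Defs.

From mathcomp Require Import all_boot all_order all_algebra.
From mathcomp Require Import all_classical all_reals all_analysis.
From mathcomp Require Import ring lra.
Import Order.TTheory GRing.Theory Num.Theory.
Import numFieldTopology.Exports numFieldNormedType.Exports.
Local Open Scope ring_scope.
Local Open Scope classical_set_scope.

(* Put [w := Sig^-1 z], so that [g0 - gs = lam w], [Sig (g0 - gs) = lam z] and
   [(g0 - gs)^T Sig (g0 - gs) = lam^2 z^T Sig^-1 z]; this gives the first half of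
   eligibility and the last claim at once.  The smallest eigenvalue of [Sig] bounds
   its quadratic form from below (a minimiser of the Rayleigh quotient on the
   compact unit sphere is an eigenvector), so [||gs||_2] stays bounded, and as [gs]
   has [s] nonzero entries, [lam ||gs||_1 <= lam sqrt s ||gs||_2 -> 0].  Expanding
   [g0^T Sig g0] then shows that [1 - g0^T Sig g0] stays away from zero; completing
   the square in the quadratic form of [SigmaG Sig g0] bounds its eigenvalues from
   below, and Cauchy-Schwarz with [Sig_ii = 1] gives [||Sig g0||_oo <= 1].
   Finally [lam ||g0 - gs||_1 >= lam^2 z^T Sig^-1 z >> 0] while [lam ||gs||_1 -> 0],
   so [lam ||g0||_1] cannot tend to zero. *)

Set Implicit Arguments.
Unset Strict Implicit.
Unset Printing Implicit Defensive.

Section QuadraticForm.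
Variable R : realType.
Implicit Types (d : nat).

Definition dot d (u v : 'cV[R]_d) : R := (u^T *m v) 0 0.
Definition bform d (A : 'M[R]_d) (u v : 'cV[R]_d) : R := (u^T *m A *m v) 0 0.

Lemma dotE d (u v : 'cV[R]_d) : dot u v = \sum_i u i 0 * v i 0.
Proof. by rewrite /dot mxE; apply: eq_bigr => i _; rewrite mxE. Qed.

Lemma dotZl d k (u v : 'cV[R]_d) : dot (k *: u) v = k * dot u v.
Proof. by rewrite /dot linearZ /= -scalemxAl mxE. Qed.

Lemma dotZr d k (u v : 'cV[R]_d) : dot u (k *: v) = k * dot u v.
Proof. by rewrite /dot -scalemxAr mxE. Qed.

Lemma dotvv_ge0 d (v : 'cV[R]_d) : 0 <= dot v v.
Proof. by rewrite dotE; apply: sumr_ge0 => i _; rewrite -expr2 sqr_ge0. Qed.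

Lemma dotvv_eq0 d (v : 'cV[R]_d) : (dot v v == 0) = (v == 0).
Proof.
apply/idP/eqP => [|->]; last by rewrite /dot mulmx0 mxE.
rewrite dotE psumr_eq0 => [/allP v0|i _]; last by rewrite -expr2 sqr_ge0.
apply/matrixP => i j; rewrite (ord1 j) mxE.
by apply/eqP; rewrite -sqrf_eq0 expr2; exact: (v0 i (mem_index_enum _)).
Qed.

Lemma dotvv_gt0 d (v : 'cV[R]_d) : v != 0 -> 0 < dot v v.
Proof. by rewrite lt_def dotvv_eq0 dotvv_ge0 andbT. Qed.

Lemma dot_qform1 d (v : 'cV[R]_d) : dot v v = qform 1%:M v.
Proof. by rewrite /qform mulmx1. Qed.

Lemma bform_qform d (A : 'M[R]_d) v : bform A v v = qform A v.
Proof. by []. Qed.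

Lemma bformE d (A : 'M[R]_d) u v :
  bform A u v = \sum_i \sum_j u i 0 * A i j * v j 0.
Proof.
rewrite /bform mxE; under eq_bigr => j _ do rewrite mxE mulr_suml.
by rewrite exchange_big; apply: eq_bigr => i _; apply: eq_bigr => j _; rewrite !mxE.
Qed.

Lemma bform_mulmxr d (A : 'M[R]_d) u v : bform A u v = dot u (A *m v).
Proof. by rewrite /bform /dot mulmxA. Qed.

Lemma bformZl d (A : 'M[R]_d) k u v : bform A (k *: u) v = k * bform A u v.
Proof. by rewrite /bform linearZ /= -!scalemxAl mxE. Qed.

Lemma bformZr d (A : 'M[R]_d) k u v : bform A u (k *: v) = k * bform A u v.
Proof. by rewrite /bform -scalemxAr mxE. Qed.

Lemma bform_delta d (A : 'M[R]_d) i v : bform A (delta_mx i 0) v = (A *m v) i 0.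
Proof. by rewrite /bform trmx_delta -mulmxA -rowE mxE. Qed.

Lemma qform_delta d (A : 'M[R]_d) i : qform A (delta_mx i 0) = A i i.
Proof. by rewrite -bform_qform bform_delta -colE mxE. Qed.

Lemma bformC d (A : 'M[R]_d) u v : A^T = A -> bform A u v = bform A v u.
Proof.
move=> symA; rewrite /bform -[in LHS](trmxK (u^T *m A *m v)) [in LHS]mxE.
by rewrite !trmx_mul trmxK symA mulmxA.
Qed.

Lemma bformDl d (A : 'M[R]_d) u1 u2 v :
  bform A (u1 + u2) v = bform A u1 v + bform A u2 v.
Proof. by rewrite /bform linearD /= !mulmxDl mxE. Qed.

Lemma bformDr d (A : 'M[R]_d) u v1 v2 :
  bform A u (v1 + v2) = bform A u v1 + bform A u v2.
Proof. by rewrite /bform mulmxDr mxE. Qed.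

Lemma qformD d (A : 'M[R]_d) u v : A^T = A ->
  qform A (u + v) = qform A u + qform A v + 2 * bform A u v.
Proof.
move=> symA; rewrite -!bform_qform bformDl !bformDr (bformC v u symA).
by rewrite mulr2n mulrDl mul1r; ring.
Qed.

Lemma qformZ d (A : 'M[R]_d) k v : qform A (k *: v) = k ^+ 2 * qform A v.
Proof. by rewrite -!bform_qform bformZl bformZr mulrA expr2. Qed.

Lemma qform_shift d (A : 'M[R]_d) m v :
  qform (A - m%:M) v = qform A v - m * dot v v.
Proof. by rewrite /qform /dot mulmxBr mulmxBl mul_mx_scalar -scalemxAl !mxE. Qed.

Lemma qform_tr_mulmx d (A : 'M[R]_d) (v : 'rV[R]_d) a :
  v *m A = a *: v -> qform A v^T = a * dot v^T v^T.
Proof. by move=> vA; rewrite /qform /dot trmxK vA -scalemxAl mxE. Qed.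

Section PositiveSemidefinite.
Variables (d : nat) (A : 'M[R]_d).
Hypotheses (symA : A^T = A) (psdA : forall v, 0 <= qform A v).

Lemma qformD_le (u v : 'cV[R]_d) :
  qform A (u + v) <= 2 * qform A u + 2 * qform A v.
Proof.
have := psdA (u - v); rewrite !qformD // -scaleN1r qformZ bformZr expr2 mulN1r.
lra.
Qed.

Lemma bform_CauchySchwarz (u v : 'cV[R]_d) :
  bform A u v ^+ 2 <= qform A u * qform A v.
Proof.
have key t : 0 <= qform A u + t ^+ 2 * qform A v + 2 * t * bform A u v.
  by have := psdA (u + t *: v); rewrite qformD // qformZ bformZr mulrA.
move: key; set p := qform A u; set r := qform A v; set b := bform A u v => key.
have p_ge0 : 0 <= p by apply: psdA.
have [r0|r_neq0] := eqVneq r 0.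
  (* the bound is affine in [t], so it fails for some [t] unless [b = 0] *)
  rewrite r0 mulr0; have [->|b_neq0] := eqVneq b 0; first by rewrite expr0n.
  have := key (- (p + 1) / (2 * b)); rewrite r0 mulr0 addr0.
  have -> : 2 * (- (p + 1) / (2 * b)) * b = - (p + 1) by field.
  lra.
have r_gt0 : 0 < r by rewrite lt_def r_neq0 psdA.
have := key (- b / r).
have -> : p + (- b / r) ^+ 2 * r + 2 * (- b / r) * b = p - b ^+ 2 / r by field.
move=> H; have := mulr_ge0 H (ltW r_gt0); rewrite mulrBl mulfVK //; lra.
Qed.

Lemma psd_qform_eq0 (w : 'cV[R]_d) : qform A w = 0 -> A *m w = 0.
Proof.
move=> Aw0; apply/matrixP => i j; rewrite (ord1 j) [RHS]mxE -bform_delta.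
have := bform_CauchySchwarz (delta_mx i 0) w; rewrite Aw0 mulr0.
by move=> le0; apply/eqP; rewrite -sqrf_eq0 eq_le le0 sqr_ge0.
Qed.

End PositiveSemidefinite.

End QuadraticForm.

Section RayleighQuotient.
Variable R : realType.

Lemma continuous_qform_tr n (A : 'M[R]_n) :
  continuous (fun u : 'rV[R]_n => qform A u^T).
Proof.
have -> : (fun u : 'rV[R]_n => qform A u^T) =
    fun u => \sum_i \sum_j u 0 i * A i j * u 0 j.
  apply/funext => u; rewrite -bform_qform bformE.
  by apply: eq_bigr => i _; apply: eq_bigr => j _; rewrite !mxE.
move=> u; apply: (cvg_big add_continuous) => [|i _]; first exact: nbhs_filter.
apply: (cvg_big add_continuous) => [|j _]; first exact: nbhs_filter.
apply: (@continuousM _ _ (fun u : 'rV[R]_n => u 0 i * A i j) (fun u => u 0 j));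
  last exact: coord_continuous.
apply: (@continuousM _ _ (fun u : 'rV[R]_n => u 0 i) (fun=> A i j)).
  exact: coord_continuous.
exact: cst_continuous.
Qed.

Lemma compact_unit_sphere n : compact [set u : 'rV[R]_n | dot u^T u^T = 1].
Proof.
apply: bounded_closed_compact.
  exists 1; split; first exact: num_real.
  move=> M M_gt1 u /= uu1; rewrite /Num.norm /= mx_normrE.
  apply: bigmax_le => [|[i j] _ /=]; first lra.
  have : u 0 j ^+ 2 <= 1.
    move: uu1; rewrite dotE (bigD1 j) //= !mxE => <-; rewrite -expr2 lerDl.
    by apply: sumr_ge0 => k _; rewrite !mxE -expr2 sqr_ge0.
  rewrite (ord1 i) => u2; apply: le_trans (ltW M_gt1).
  by rewrite ler_norml; apply/andP; split; nra.
have -> : [set u : 'rV[R]_n | dot u^T u^T = 1] =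
    (fun u => qform 1%:M u^T) @^-1` [set 1].
  by apply/funext => u /=; rewrite dot_qform1.
apply: preimage_closed; first by move=> u _; exact: continuous_qform_tr.
exact: closed_eq.
Qed.

Lemma qform_min_unit n (A : 'M[R]_n.+1) : exists2 w : 'cV[R]_n.+1,
  dot w w = 1 & forall v, dot v v = 1 -> qform A w <= qform A v.
Proof.
have sphere0 : [set u : 'rV[R]_n.+1 | dot u^T u^T = 1] !=set0.
  exists (delta_mx 0 0); rewrite /= trmx_delta dotE (bigD1 0) //= big1.
    by rewrite !mxE mulr1 addr0.
  by move=> i /negbTE i0; rewrite !mxE i0 mulr0.
have [w /set_mem ww1 wmin] := compact_EVT_min sphere0 (@compact_unit_sphere n.+1)
  (continuous_subspaceT (@continuous_qform_tr _ A)).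
exists w^T => // v vv1; have := wmin v^T; rewrite trmxK; apply; apply/mem_set.
by rewrite /= trmxK.
Qed.

Lemma qform_ge_min d (A : 'M[R]_d) m :
  (forall v, dot v v = 1 -> m <= qform A v) -> forall v, m * dot v v <= qform A v.
Proof.
move=> min_m v; have [->|v_neq0] := eqVneq v 0.
  by rewrite /dot /qform trmx0 !mul0mx mxE mulr0.
have vv_gt0 := dotvv_gt0 v_neq0.
pose r := Num.sqrt (dot v v).
have r_gt0 : 0 < r by rewrite sqrtr_gt0.
have r2 : r ^+ 2 = dot v v by rewrite sqr_sqrtr // dotvv_ge0.
have := min_m (r^-1 *: v).
rewrite qformZ dotZl dotZr mulrA -expr2 exprVn r2 mulVf ?gt_eqF //.
by move=> /(_ erefl); rewrite -ler_pdivlMr // mulrC.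
Qed.

Lemma eigenvalue_qform_min d (A : 'M[R]_d) (w : 'cV[R]_d) : A^T = A ->
  dot w w = 1 -> (forall v, dot v v = 1 -> qform A w <= qform A v) ->
  eigenvalue A (qform A w).
Proof.
(* [A - m] is positive semidefinite and vanishes at [w], so it kills [w]. *)
move=> symA ww1 wmin; set m := qform A w; pose B := A - m%:M.
have symB : B^T = B by rewrite /B linearB /= tr_scalar_mx symA.
have psdB v : 0 <= qform B v by rewrite qform_shift subr_ge0 qform_ge_min.
have /(psd_qform_eq0 symB psdB) Bw0 : qform B w = 0.
  by rewrite qform_shift ww1 mulr1 subrr.
apply/eigenvalueP; exists w^T; last by rewrite trmx_eq0 -dotvv_eq0 ww1 oner_eq0.
have -> : A = B + m%:M by rewrite /B subrK.
by rewrite mulmxDr mul_mx_scalar -[w^T *m B]trmxK trmx_mul trmxK symB Bw0 trmx0 add0r.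
Qed.

Lemma mineig_qform_lb d (A : 'M[R]_d) c : A^T = A ->
  (forall a, eigenvalue A a -> c <= a) -> forall v, c * dot v v <= qform A v.
Proof.
case: d A => [A _ _ v|n A symA eig_c].
  by rewrite -bform_qform bformE dotE !big_ord0 mulr0.
have [w ww1 wmin] := qform_min_unit A.
move=> v; apply: le_trans (qform_ge_min wmin v).
apply: ler_wpM2r; first exact: dotvv_ge0.
exact/eig_c/eigenvalue_qform_min.
Qed.

Lemma qform_lb_eigenvalue d (A : 'M[R]_d) c a :
  (forall v, c * dot v v <= qform A v) -> eigenvalue A a -> c <= a.
Proof.
move=> lbA /eigenvalueP [v vA v_neq0]; have := lbA v^T.
rewrite (qform_tr_mulmx vA) ler_pM2r // dotvv_gt0 // trmx_eq0 //.
Qed.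

Lemma qform_lb_posdef d (A : 'M[R]_d) c : 0 < c ->
  (forall v, c * dot v v <= qform A v) -> posdef A.
Proof.
move=> c_gt0 lbA v /dotvv_gt0 vv_gt0.
by apply: lt_le_trans (lbA v); rewrite mulr_gt0.
Qed.

Lemma qform_lb_unitmx d (A : 'M[R]_d) c : 0 < c ->
  (forall v, c * dot v v <= qform A v) -> A \in unitmx.
Proof.
move=> c_gt0 lbA; apply/negPn/negP => A_singular.
suff /(qform_lb_eigenvalue lbA) : eigenvalue A 0 by lra.
rewrite /eigenvalue /eigenspace (raddf0 (@scalar_mx _ _)) subr0.
by rewrite kermx_eq0 row_free_unit.
Qed.

End RayleighQuotient.

Section EntrywiseNorms.
Variable R : realType.
Implicit Types (d : nat).

Lemma normoo_le d (v : 'cV[R]_d) b :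
  0 <= b -> (forall i, `|v i 0| <= b) -> normoo v <= b.
Proof. by move=> b_ge0 vb; apply: bigmax_le => // i _; apply: vb. Qed.

Lemma le_normoo d (v : 'cV[R]_d) i : `|v i 0| <= normoo v.
Proof. exact: (le_bigmax 0 (fun i => `|v i 0|) i). Qed.

Lemma normooZ_le d k (v : 'cV[R]_d) : normoo v <= 1 -> normoo (k *: v) <= `|k|.
Proof.
move=> v_le1; apply: normoo_le => // i.
by rewrite mxE normrM ler_piMr // (le_trans (le_normoo v i)).
Qed.

Lemma norm1_ge0 d (v : 'cV[R]_d) : 0 <= norm1 v.
Proof. exact: sumr_ge0. Qed.

Lemma norm1B d (u v : 'cV[R]_d) : norm1 (u - v) <= norm1 u + norm1 v.
Proof. by rewrite -big_split; apply: ler_sum => i _; rewrite !mxE ler_normB. Qed.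

Lemma dot_le_norm1 d (u v : 'cV[R]_d) : normoo v <= 1 -> dot u v <= norm1 u.
Proof.
move=> v_le1; rewrite dotE; apply: ler_sum => i _.
apply: le_trans (ler_norm _) _; rewrite normrM ler_piMr //.
exact: le_trans (le_normoo v i) v_le1.
Qed.

Lemma norm1_sq_le_support d (S : {set 'I_d}) (v : 'cV[R]_d) :
  (forall j, j \notin S -> v j 0 = 0) -> norm1 v ^+ 2 <= #|S|%:R * dot v v.
Proof.
move=> suppS; pose a := map_mx Num.norm v; pose e := \col_i ((i \in S)%:R : R).
have psd1 (w : 'cV[R]_d) : 0 <= qform 1%:M w by rewrite -dot_qform1 dotvv_ge0.
have := bform_CauchySchwarz (trmx1 _ _) psd1 a e.
rewrite bform_mulmxr mul1mx -!dot_qform1.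
have -> : dot a e = norm1 v.
  rewrite dotE; apply: eq_bigr => i _; rewrite !mxE.
  by case: (boolP (i \in S)) => [_|/suppS ->]; rewrite ?mulr1 ?normr0 ?mulr0.
have -> : dot a a = dot v v.
  by rewrite !dotE; apply: eq_bigr => i _; rewrite !mxE -!expr2 real_normK ?num_real.
have -> : dot e e = #|S|%:R.
  rewrite dotE -sumr_const [RHS]big_mkcond /=; apply: eq_bigr => i _; rewrite !mxE.
  by case: (i \in S); rewrite ?mulr1 ?mulr0.
by rewrite mulrC.
Qed.

Lemma norm1_le_support d (S : {set 'I_d}) (v : 'cV[R]_d) b :
  (forall j, j \notin S -> v j 0 = 0) -> dot v v <= b ->
  norm1 v <= Num.sqrt #|S|%:R * Num.sqrt b.
Proof.
move=> suppS vv_le; rewrite -sqrtrM // -(ger0_norm (norm1_ge0 v)) -sqrtr_sqr.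
apply: ler_wsqrtr; apply: le_trans (norm1_sq_le_support suppS) _.
exact: ler_wpM2l.
Qed.

End EntrywiseNorms.

Section SigmaG.
Variables (R : realType) (d : nat) (Sg : 'M[R]_d).
Hypothesis symSg : Sg^T = Sg.

Lemma qform_SigmaG g x (y : 'cV[R]_d) :
  qform (SigmaG Sg g) (col_mx x%:M y) =
  (1 - qform Sg g) * x ^+ 2 + qform Sg (y + x *: g).
Proof.
rewrite qformD // qformZ bformZr (bformC y g symSg) -!bform_qform /bform.
rewrite /SigmaG tr_col_mx tr_scalar_mx mul_row_block mul_row_col mulmx1.
rewrite !mulmxDl !mul_scalar_mx !mul_mx_scalar -!scalemxAl mulmxA.
have symE : \sum_j (y^T *m Sg) 0 j * g j 0 = \sum_j (g^T *m Sg) 0 j * y j 0.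
  by have := bformC y g symSg; rewrite /bform !mxE.
by rewrite !mxE symE eqxx mulr1n; ring.
Qed.

Lemma dot_col_mx x (y : 'cV[R]_d) :
  dot (col_mx x%:M y) (col_mx x%:M y) = x ^+ 2 + dot y y.
Proof.
by rewrite /dot tr_col_mx tr_scalar_mx mul_row_col mul_scalar_mx !mxE eqxx mulr1n expr2.
Qed.

Lemma SigmaG_qform_lb g c e : 0 < c -> 0 < e ->
  (forall v, c * dot v v <= qform Sg v) -> e <= 1 - qform Sg g ->
  forall v, Num.min (c / 2) (e * c / (c + 2)) * dot v v <= qform (SigmaG Sg g) v.
Proof.
move=> c_gt0 e_gt0 lbSg margin v.
rewrite -(vsubmxK v) [usubmx v]mx11_scalar qform_SigmaG dot_col_mx.
set x := usubmx v 0 0; set y := dsubmx v; set u := y + x *: g.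
(* [c |v|^2 <= 2 c |u|^2 + (c + 2) x^2] is where the constant comes from. *)
set k := Num.min _ _.
have psd1 (w : 'cV[R]_d) : 0 <= qform 1%:M w by rewrite -dot_qform1 dotvv_ge0.
have yy : dot y y <= 2 * dot u u + 2 * (x ^+ 2 * dot g g).
  have -> : y = u + (- x) *: g by rewrite /u scaleNr addrK.
  by rewrite !dot_qform1 -sqrrN -qformZ; apply: qformD_le; [exact: trmx1|].
have cgg : c * dot g g <= 1.
  by apply: le_trans (lbSg g) _; move: margin; lra.
have k_ge0 : 0 <= k by rewrite le_min !divr_ge0 ?mulr_ge0; lra.
have k1 : k * 2 <= c by rewrite -ler_pdivlMr // ge_min lexx.
have k2 : k * (c + 2) <= e * c by rewrite -ler_pdivlMr ?ge_min ?lexx ?orbT //; lra.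
have x2_ge0 : 0 <= x ^+ 2 := sqr_ge0 x.
have uu_ge0 := dotvv_ge0 u.
have cyy : k * (c * dot y y) <= k * (2 * (c * dot u u) + 2 * x ^+ 2).
  apply: ler_wpM2l => //; have := ler_wpM2l x2_ge0 cgg.
  have := ler_wpM2l (ltW c_gt0) yy; lra.
have kx := ler_wpM2r x2_ge0 k2.
have ku := ler_wpM2r (mulr_ge0 (ltW c_gt0) uu_ge0) k1.
have ex := ler_wpM2r x2_ge0 margin.
have cu := lbSg u.
suff : k * (x ^+ 2 + dot y y) <= e * x ^+ 2 + c * dot u u by lra.
by rewrite -(ler_pM2l c_gt0); lra.
Qed.

Lemma normoo_mulmx_le1 g : (forall v, 0 <= qform Sg v) -> (forall i, Sg i i = 1) ->
  qform Sg g <= 1 -> normoo (Sg *m g) <= 1.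
Proof.
move=> psdSg diag1 gg_le1; apply: normoo_le => // i.
have := bform_CauchySchwarz symSg psdSg (delta_mx i 0) g.
rewrite bform_delta qform_delta diag1 mul1r => CS.
have := psdSg g => q_ge0; rewrite ler_norml; apply/andP; split; nra.
Qed.

End SigmaG.

Section InverseShift.
Variables (R : realType) (d : nat) (Sg : 'M[R]_d).
Hypotheses (symSg : Sg^T = Sg) (unitSg : Sg \in unitmx).

Lemma qform_invmx_mulmx z : qform Sg (invmx Sg *m z) = qform (invmx Sg) z.
Proof. by rewrite /qform -mulmxA mulKVmx // trmx_mul trmx_inv symSg. Qed.

Lemma qform_perturb_le g z l : normoo z <= 1 -> 0 <= l ->
  qform Sg (g + l *: (invmx Sg *m z)) <=
  qform Sg g + l ^+ 2 * qform (invmx Sg) z + 2 * (l * norm1 g).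
Proof.
move=> z_le1 l_ge0.
rewrite qformD // qformZ qform_invmx_mulmx bformZr bform_mulmxr mulKVmx //.
have := ler_wpM2l l_ge0 (dot_le_norm1 g z_le1); lra.
Qed.

Lemma qform_invmx_le_norm1 z l : normoo z <= 1 -> 0 <= l ->
  l ^+ 2 * qform (invmx Sg) z <= l * norm1 (l *: (invmx Sg *m z)).
Proof.
move=> z_le1 l_ge0.
rewrite -qform_invmx_mulmx -bform_qform bform_mulmxr mulKVmx // expr2 -mulrA -dotZl.
by apply: ler_wpM2l => //; apply: dot_le_norm1.
Qed.

End InverseShift.

Lemma away0_not_cvg0 (R : realType) (u : nat -> R) :
  away0 u -> ~ u n @[n --> \oo] --> 0.
Proof.
move=> [c c_gt0 u_ge] u_cvg0.
have u_lt := cvgr_lt (FF := eventually_filter) 0 u_cvg0 c c_gt0.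
near \oo => n.
have : u n < c by near: n; exact: u_lt.
have : c <= u n by near: n; exact: u_ge.
lra.
Unshelve. all: by end_near. Qed.

Section Lemma3p7.
Variables (R : realType) (d : nat -> nat) (Sig : forall n, 'M[R]_(d n)).
Variables (S : forall n, {set 'I_(d n)}) (lam : nat -> R).
Variables z gs : forall n, 'cV[R]_(d n).
Hypotheses (symSig : forall n, (Sig n)^T = Sig n) (eigSig : mineig_away0 Sig).
Hypotheses (lam_gt0 : forall n, 0 < lam n) (z_le1 : forall n, normoo (z n) <= 1).
Hypothesis gs_supp : forall n (j : 'I_(d n)), j \notin S n -> gs n j 0 = 0.

Let a n := lam n ^+ 2 * qform (invmx (Sig n)) (z n).
Let g0 n := gs n + lam n *: (invmx (Sig n) *m z n).

Hypothesis a_away0 : away0 a.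
Hypothesis gs_margin : away0 (fun n => 1 - a n - qform (Sig n) (gs n)).
Hypothesis rate : lam n * Num.sqrt #|S n|%:R @[n --> \oo] --> 0.

Lemma Sig_qform_lb : exists2 c : R, 0 < c &
  \forall n \near \oo, forall v, c * dot v v <= qform (Sig n) v.
Proof.
case: eigSig => c c_gt0 eig_c; exists c => //.
by apply: filterS eig_c => n /(mineig_qform_lb (symSig n)).
Qed.

Lemma Sig_unitmx : \forall n \near \oo, Sig n \in unitmx.
Proof.
have [c c_gt0 lb_c] := Sig_qform_lb.
by apply: filterS lb_c => n /(qform_lb_unitmx c_gt0).
Qed.

Lemma g0_sub_gs n : g0 n - gs n = lam n *: (invmx (Sig n) *m z n).
Proof. by rewrite /g0 addrAC subrr add0r. Qed.

Lemma lam_norm1_gs_cvg0 : lam n * norm1 (gs n) @[n --> \oo] --> 0.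
Proof.
have [c c_gt0 lb_c] := Sig_qform_lb.
case: a_away0 => c2 c2_gt0 a_ge; case: gs_margin => c3 c3_gt0 gs_le.
pose K := Num.sqrt c^-1.
apply: (@squeeze_cvgr _ _ _ _ (fun=> 0) (fun n => lam n * Num.sqrt #|S n|%:R * K)).
- near=> n; have lam_ge0 := ltW (lam_gt0 n).
  rewrite mulr_ge0 ?norm1_ge0 //= -mulrA ler_wpM2l //.
  apply: norm1_le_support (gs_supp (n:=n)) _.
  rewrite -(ler_pM2l c_gt0) mulfV ?gt_eqF //.
  have : c * dot (gs n) (gs n) <= qform (Sig n) (gs n).
    by near: n; apply: filterS lb_c => n; apply.
  have : c3 <= 1 - a n - qform (Sig n) (gs n) by near: n; exact: gs_le.
  have : c2 <= a n by near: n; exact: a_ge.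
  lra.
- exact: cvg_cst.
- by rewrite -(mul0r K); apply: cvgMl.
Unshelve. all: by end_near. Qed.

Lemma g0_margin : exists2 e : R, 0 < e &
  \forall n \near \oo, e <= 1 - qform (Sig n) (g0 n).
Proof.
case: gs_margin => c3 c3_gt0 gs_le; exists (c3 / 2); first by rewrite divr_gt0.
have gs_lt := cvgr_lt (FF := eventually_filter) 0 lam_norm1_gs_cvg0 (c3 / 4)
  (divr_gt0 c3_gt0 (ltr0Sn _ _)).
near=> n.
have unit_n : Sig n \in unitmx by near: n; exact: Sig_unitmx.
have := qform_perturb_le (symSig n) unit_n (gs n) (z_le1 n) (ltW (lam_gt0 n)).
have : c3 <= 1 - a n - qform (Sig n) (gs n) by near: n; exact: gs_le.
have : lam n * norm1 (gs n) < c3 / 4 by near: n; exact: gs_lt.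
rewrite /g0 /a; lra.
Unshelve. all: by end_near. Qed.

Lemma eligible_g0 : eligible Sig gs g0 lam.
Proof.
split; last exact: lam_norm1_gs_cvg0.
near=> n.
have -> : gs n - g0 n = (- lam n) *: (invmx (Sig n) *m z n).
  by rewrite -opprB g0_sub_gs scaleNr.
rewrite -scalemxAr mulKVmx; last by near: n; exact: Sig_unitmx.
by apply: le_trans (normooZ_le _ (z_le1 n)) _; rewrite normrN gtr0_norm.
Unshelve. all: by end_near. Qed.

Lemma allowed_g0 : (forall n v, 0 <= qform (Sig n) v) -> (forall n i, Sig n i i = 1) ->
  allowed Sig g0.
Proof.
move=> psdSig diagSig.
have [c c_gt0 lb_c] := Sig_qform_lb; have [e e_gt0 g0_le] := g0_margin.
pose k := Num.min (c / 2) (e * c / (c + 2)).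
have k_gt0 : 0 < k by rewrite lt_min !divr_gt0 ?mulr_gt0 ?addr_gt0.
have SigmaG_lb : \forall n \near \oo,
    forall v, k * dot v v <= qform (SigmaG (Sig n) (g0 n)) v.
  near=> n; apply: (SigmaG_qform_lb (symSig n)) => //.
  - by near: n; exact: lb_c.
  - by near: n; exact: g0_le.
split; last by exists k => //; near=> n => a0; apply: qform_lb_eigenvalue; near: n.
near=> n; split; first by apply: qform_lb_posdef k_gt0 _; near: n.
apply: normoo_mulmx_le1 => //.
have : e <= 1 - qform (Sig n) (g0 n) by near: n; exact: g0_le.
lra.
Unshelve. all: by end_near. Qed.

Lemma lam_norm1_g0_not_cvg0 : ~ lam n * norm1 (g0 n) @[n --> \oo] --> 0.
Proof.
move=> g0_cvg0.
apply: (@away0_not_cvg0 _ (fun n => lam n * norm1 (g0 n) + lam n * norm1 (gs n))).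
  case: a_away0 => c2 c2_gt0 a_ge; exists c2 => //; near=> n.
  have : c2 <= a n by near: n; exact: a_ge.
  have unit_n : Sig n \in unitmx by near: n; exact: Sig_unitmx.
  have := qform_invmx_le_norm1 (symSig n) unit_n (z_le1 n) (ltW (lam_gt0 n)).
  have := ler_wpM2l (ltW (lam_gt0 n)) (norm1B (g0 n) (gs n)).
  rewrite g0_sub_gs /a; lra.
by rewrite -[0](addr0 0); apply: cvgD; last exact: lam_norm1_gs_cvg0.
Unshelve. all: by end_near. Qed.

Lemma away0_qform_g0_sub_gs : away0 (fun n => qform (Sig n) (g0 n - gs n)).
Proof.
case: a_away0 => c2 c2_gt0 a_ge; exists c2 => //; near=> n.
rewrite g0_sub_gs qformZ qform_invmx_mulmx //; last by near: n; exact: Sig_unitmx.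
by near: n; exact: a_ge.
Unshelve. all: by end_near. Qed.

End Lemma3p7.

Theorem lemma3p7 (R : realType) (d : nat -> nat)
  (Sig : forall n, 'M[R]_(d n))
  (S : forall n, {set 'I_(d n)})
  (lam : nat -> R)
  (z gs : forall n, 'cV[R]_(d n))
  (Hsym : forall n, (Sig n)^T = Sig n)
  (Hpsd : forall n (v : 'cV[R]_(d n)), 0 <= qform (Sig n) v)
  (Hdiag : forall n i, Sig n i i = 1)
  (Heig : mineig_away0 Sig)
  (Hlam : forall n, 0 < lam n)
  (Hz : forall n, normoo (z n) <= 1)
  (Hz1 : away0 (fun n => 1 - lam n ^+ 2 * qform (invmx (Sig n)) (z n)))
  (Hz2 : away0 (fun n => lam n ^+ 2 * qform (invmx (Sig n)) (z n)))
  (Hsupp : forall n (j : 'I_(d n)), j \notin S n -> gs n j 0 = 0)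
  (Hgs : away0 (fun n => 1 - lam n ^+ 2 * qform (invmx (Sig n)) (z n)
                          - qform (Sig n) (gs n)))
  (Hrate : lam n * Num.sqrt (#|S n|%:R) @[n --> \oo] --> 0) :
  let g0 := fun n => gs n + lam n *: (invmx (Sig n) *m z n) in
  eligible Sig gs g0 lam /\
  allowed Sig g0 /\
  ~ (lam n * norm1 (g0 n) @[n --> \oo] --> 0) /\
  away0 (fun n => qform (Sig n) (g0 n - gs n)).
Proof.
move=> g0; split; [|split; [|split]].
- exact: eligible_g0 Hsym Heig Hlam Hz Hsupp Hz2 Hgs Hrate.
- exact: allowed_g0 Hsym Heig Hlam Hz Hsupp Hz2 Hgs Hrate Hpsd Hdiag.
- exact: lam_norm1_g0_not_cvg0 Hsym Heig Hlam Hz Hsupp Hz2 Hgs Hrate.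
- exact: away0_qform_g0_sub_gs gs Hsym Heig Hz2.
Qed.
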